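(* For all $n,k\in\mathbb{N}$, there is a set $S$ of $n$ polygonal curves in $\mathbb{R}^1$ with $k$ vertices each such that the Voronoi diagram of $S$ under the discrete Fréchet distance has at least $\lfloor n/k\rfloor^k$ Voronoi regions, i.e. there are at least $\lfloor n/k\rfloor^k$ query curves $Q$ (with $k$ vertices in $\mathbb{R}^1$) whose nearest-neighbor sets $N_S(Q)$ are pairwise distinct.
   Context: A polygonal curve in $\mathbb{R}^d$ with $k$ vertices is a sequence $P=(p_1,\dots,p_k)$ of points of $\mathbb{R}^d$. The discrete Fréchet distance between $P=(p_1,\dots,p_k)$ and $Q=(q_1,\dots,q_l)$ is $\min_{C}\max_{(i,j)\in C}\|p_i-q_j\|$, where $C$ ranges over sequences $(i_1,j_1),\dots,(i_t,j_t)$ with $(i_1,j_1)=(1,1)$, $(i_t,j_t)=(k,l)$, and each step $(i_{s+1},j_{s+1})\in\{(i_s+1,j_s),(i_s,j_s+1),(i_s+1,j_s+1)\}$. For a finite set $S$ of curves and a query curve $Q$, $N_S(Q)$ is the set of curves in $S$ at minimum discrete Fréchet distance from $Q$. A Voronoi region of $S$ is a nonempty set of query curves sharing a common nearest-neighbor set $N_S(Q)$. *)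

From HB Require Import structures.
From mathcomp Require Import all_boot all_order all_algebra.
From mathcomp Require Import boolp classical_sets reals.
Set Implicit Arguments. Unset Strict Implicit. Unset Printing Implicit Defensive.
Import Order.TTheory GRing.Theory Num.Theory.
Local Open Scope ring_scope.
Local Open Scope classical_set_scope.

(* A polygonal curve in R^1 is the sequence of its vertices (a seq R);
   it has k vertices iff its size is k.  Vertices are 0-indexed here:
   p_1..p_k of the paper are nth 0 P 0 .. nth 0 P (k-1). *)

Definition coupling_step (a b : nat * nat) : bool :=
  [|| b == (a.1.+1, a.2), b == (a.1, a.2.+1) | b == (a.1.+1, a.2.+1)].

Definition is_coupling (k l : nat) (C : seq (nat * nat)) : bool :=
  match C with
  | [::] => false
  | c :: C' => [&& c == (0, 0)%N, last c C' == (k.-1, l.-1) & path coupling_step c C']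
  end.

Definition coupling_cost {R : realType} (P Q : seq R) (C : seq (nat * nat)) : R :=
  \big[Num.max/0]_(c <- C) `|nth 0 P c.1 - nth 0 Q c.2|.

Definition dfd {R : realType} (P Q : seq R) : R :=
  inf [set coupling_cost P Q C | C in [set C | is_coupling (size P) (size Q) C]].

Definition nearest_set {R : realType} (S : seq (seq R)) (Q : seq R) : set (seq R) :=
  [set P | P \in S /\ forall P', P' \in S -> dfd P Q <= dfd P' Q].

(* Let m = n %/ k and write the first m k curves as p = g m + j with g < k and
   j < m; queries are indexed by maps c from groups to ranks.  All vertices lie
   near a grid of mesh much larger than the offsets, which forces the discrete
   Frechet distance of a curve and a query to be the largest offset between
   corresponding vertices.  Vertex 0 puts every curve at distance at least
   [radius c] from the query, and a curve with g < k attains this bound iff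
   j <= c g: the rank is tested at vertex g for g >= 2, while groups 0 and 1
   share vertex 1, on opposite sides of the query.  So if c g < c' g, the curve
   (g, c' g) is nearest to the query of c' but not to that of c.  Vertex 1 also
   carries a small perturbation p / (2 (n + 1)) which keeps all n curves
   distinct.  For k = 1 the curves and queries are the points 0, ..., n - 1. *)

From mathcomp Require Import all_boot all_order all_algebra.
From mathcomp Require Import boolp classical_sets reals.
From mathcomp Require Import lra zify.
Set Implicit Arguments. Unset Strict Implicit. Unset Printing Implicit Defensive.
Import Order.TTheory GRing.Theory Num.Theory.
Local Open Scope ring_scope.
Local Open Scope classical_set_scope.

Section DiscreteFrechet.
Variable R : realType.
Implicit Types (P Q : seq R) (C : seq (nat * nat)) (E : R).

Lemma coupling_cost_ge0 P Q C : 0 <= coupling_cost P Q C.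
Proof. exact: bigmax_ge_id. Qed.

Lemma coupling_cost_ge P Q C c :
  c \in C -> `|P`_c.1 - Q`_c.2| <= coupling_cost P Q C.
Proof. by move=> cC; exact: (@le_bigmax_seq _ _ _ _ _ _ predT _ cC). Qed.

Lemma coupling_cost_le P Q C E : 0 <= E ->
  (forall c, c \in C -> `|P`_c.1 - Q`_c.2| <= E) -> coupling_cost P Q C <= E.
Proof.
move=> E_ge0 bndC; rewrite /coupling_cost big_seq_cond.
by apply: bigmax_le => // c /andP[cC _]; exact: bndC.
Qed.

Lemma dfd_le_coupling P Q C :
  is_coupling (size P) (size Q) C -> dfd P Q <= coupling_cost P Q C.
Proof.
move=> CPQ; apply: ge_inf; last by exists C.
by exists 0 => _ [D _ <-]; exact: coupling_cost_ge0.
Qed.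

Lemma dfd_ge P Q E : (exists C, is_coupling (size P) (size Q) C) ->
  (forall C, is_coupling (size P) (size Q) C -> E <= coupling_cost P Q C) ->
  E <= dfd P Q.
Proof.
move=> [C CPQ] lbE; apply: lb_le_inf; first by exists (coupling_cost P Q C), C.
by move=> _ [D DPQ <-]; exact: lbE.
Qed.

Lemma coupling_path_le_last c s : path coupling_step c s ->
  forall d, d \in c :: s -> (d.1 <= (last c s).1)%N /\ (d.2 <= (last c s).2)%N.
Proof.
elim: s c => [|c' s IHs] c /=; first by move=> _ d; rewrite inE => /eqP->.
case/andP => step_cc' path_s d; rewrite inE => /orP [/eqP->|ds]; last exact: IHs.
have [] := IHs c' path_s c' (mem_head _ _); set L := last c' s.
by move: step_cc'; rewrite /coupling_step => /or3P [] /eqP-> /=; lia.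
Qed.

Lemma coupling_path_row c s a : path coupling_step c s ->
  (c.1 <= a <= (last c s).1)%N -> exists b, (a, b) \in c :: s.
Proof.
elim: s c => [|c' s IHs] c /=.
  by case: c => x y _ /= a_eq; exists y; rewrite inE; have -> : a = x by lia.
case/andP => step_cc' path_s a_bnd; have [->|a_neq] := eqVneq a c.1.
  by exists c.2; rewrite inE -surjective_pairing eqxx.
have [b ab_s] : exists b, (a, b) \in c' :: s.
  apply: IHs path_s _; move: a_bnd a_neq; set L := last c' s.
  by move: step_cc'; rewrite /coupling_step => /or3P [] /eqP-> /=; lia.
by exists b; rewrite inE ab_s orbT.
Qed.

Lemma coupling_head k l C : is_coupling k l C -> (0, 0)%N \in C.
Proof. by case: C => // c C /and3P [/eqP-> _ _]; rewrite mem_head. Qed.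

Lemma coupling_row k l C i : is_coupling k l C -> (0 < l)%N -> (i < k)%N ->
  exists2 b, (b < l)%N & (i, b) \in C.
Proof.
case: C => // c C /and3P [/eqP c0 /eqP last_C path_C] l_gt0 i_lt.
have [b ib_C] : exists b, (i, b) \in c :: C.
  by apply: (coupling_path_row path_C); rewrite last_C c0 /=; lia.
exists b => //; have [_] := coupling_path_le_last path_C ib_C.
by rewrite last_C /=; lia.
Qed.

Definition diag_coupling (k : nat) := [seq (i, i) | i <- iota 0 k].

Lemma diag_path a n :
  path coupling_step (a, a) [seq (i, i) | i <- iota a.+1 n] /\
  last (a, a) [seq (i, i) | i <- iota a.+1 n] = (a + n, a + n)%N.
Proof.
elim: n a => [|n IHn] a /=; first by rewrite addn0.
have [-> ->] := IHn a.+1; by rewrite addSnnS /coupling_step /= eqxx !orbT.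
Qed.

Lemma is_coupling_diag k : (0 < k)%N -> is_coupling k k (diag_coupling k).
Proof.
case: k => // k _; have [path_k last_k] := diag_path 0 k.
by rewrite /diag_coupling /= last_k path_k add0n eqxx.
Qed.

Lemma dfd_le_pointwise P Q E : size P = size Q -> (0 < size P)%N -> 0 <= E ->
  (forall i, (i < size P)%N -> `|P`_i - Q`_i| <= E) -> dfd P Q <= E.
Proof.
move=> eq_size P_gt0 E_ge0 bndPQ.
have diagPQ : is_coupling (size P) (size Q) (diag_coupling (size P)).
  by rewrite -eq_size; exact: is_coupling_diag.
apply: le_trans (dfd_le_coupling diagPQ) _; apply: coupling_cost_le => // c.
by case/mapP => i; rewrite mem_iota => /andP [_ i_lt] ->; exact: bndPQ.
Qed.

Lemma dfd_ge_matched P Q E : size P = size Q -> (0 < size P)%N ->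
  (forall C, is_coupling (size P) (size Q) C ->
     exists2 c, c \in C & E <= `|P`_c.1 - Q`_c.2|) ->
  E <= dfd P Q.
Proof.
move=> eq_size P_gt0 lbE; apply: dfd_ge => [|C CPQ].
  by exists (diag_coupling (size P)); rewrite -eq_size; exact: is_coupling_diag.
by have [c cC] := lbE C CPQ; move/le_trans; apply; exact: coupling_cost_ge.
Qed.

Lemma dfd_ge_head P Q : size P = size Q -> (0 < size P)%N ->
  `|P`_0 - Q`_0| <= dfd P Q.
Proof.
move=> eq_size P_gt0; apply: dfd_ge_matched => // C CPQ.
by exists (0, 0)%N; [exact: coupling_head CPQ|].
Qed.

Definition spread (M : R) (x : nat -> R) (k : nat) : seq R :=
  mkseq (fun i => M * i%:R + x i) k.

Lemma size_spread M x k : size (spread M x k) = k.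
Proof. exact: size_mkseq. Qed.

Lemma nth_spread M x k i : (i < k)%N -> (spread M x k)`_i = M * i%:R + x i.
Proof. exact: nth_mkseq. Qed.

Lemma dfd_spread_le M x y k E : (0 < k)%N -> 0 <= E ->
  (forall i, (i < k)%N -> `|x i - y i| <= E) ->
  dfd (spread M x k) (spread M y k) <= E.
Proof.
move=> k_gt0 E_ge0 bnd; apply: dfd_le_pointwise; rewrite ?size_spread // => i ik.
by rewrite !nth_spread // opprD addrACA subrr add0r; exact: bnd.
Qed.

(* When consecutive vertices are [M >= 4 W] apart and all offsets are at most
   [W], a coupling pair off the diagonal costs at least [2 W], which is more
   than any diagonal pair. *)
Lemma dfd_spread_ge M W x y k i :
  (forall j, (j < k)%N -> `|x j| <= W /\ `|y j| <= W) -> 4 * W <= M ->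
  (i < k)%N -> `|x i - y i| <= dfd (spread M x k) (spread M y k).
Proof.
move=> bnd M_ge ik; have k_gt0 : (0 < k)%N by lia.
apply: dfd_ge_matched; rewrite ?size_spread // => C CPQ.
have [b bk ibC] := coupling_row CPQ k_gt0 ik.
exists (i, b) => //=; rewrite !nth_spread //.
have [<-|neq_bi] := eqVneq b i; first by rewrite opprD addrACA subrr add0r.
have [xi_bnd yi_bnd] := bnd i ik; have [_ yb_bnd] := bnd b bk.
apply: (@le_trans _ _ (2 * W)); first by apply: le_trans (ler_normB _ _) _; lra.
move: xi_bnd yb_bnd; rewrite !ler_norml => /andP[? ?] /andP[? ?].
have [bi|ib] := ltnP b i.
  have : M * (b%:R + 1) <= M * i%:R by rewrite ler_wpM2l ?natr1 ?ler_nat //; lra.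
  by rewrite mulrDr mulr1 ler_normr => ?; apply/orP; left; lra.
have : M * (i%:R + 1) <= M * b%:R.
  by rewrite ler_wpM2l ?natr1 ?ler_nat //; [lra|lia].
by rewrite mulrDr mulr1 ler_normr => ?; apply/orP; right; lra.
Qed.

Lemma nearest_setE (S : seq (seq R)) Q D :
  (forall P, P \in S -> D <= dfd P Q) -> (exists2 P0, P0 \in S & dfd P0 Q <= D) ->
  nearest_set S Q = [set P | P \in S /\ dfd P Q <= D].
Proof.
move=> lbD [P0 P0S P0D]; apply/seteqP; split => P /= [PS PD]; split => //.
  exact: le_trans (PD P0 P0S) P0D.
by move=> P' P'S; apply: le_trans PD (lbD P' P'S).
Qed.

End DiscreteFrechet.

Lemma fraction_inj (R : realType) (t t' : R) (z z' : int) :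
  0 <= t < 1 -> 0 <= t' < 1 -> t + z%:~R = t' + z'%:~R -> t = t'.
Proof.
move=> /andP[t_ge0 t_lt1] /andP[t'_ge0 t'_lt1] eq_tz.
have : `|z - z'|%:~R < 1 :> R by rewrite intr_norm intrB ltr_norml; apply/andP; split; lra.
rewrite -(mulr1z 1) ltr_int => lt1; have zz' : z = z' by lia.
by move: eq_tz; rewrite zz' => /addIr.
Qed.

Section Construction.
Variables (R : realType) (n k : nat).
Hypothesis k_gt1 : (1 < k)%N.
Local Notation m := (n %/ k)%N.

Definition curve_offset (g j : nat) (t : R) (i : nat) : R :=
  if i == 0%N then 0
  else if i == 1%N then
    t + (if g == 0%N then - (j.+1 + m)%:R else if g == 1%N then (j.+1 + m)%:R else 0)
  else if g == i then j.+1%:R else 0.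

Definition radius (c : nat -> nat) : R := (c 0%N + c 1%N)%:R / 2 + 3 / 2 + m%:R.

Definition query_offset (c : nat -> nat) (i : nat) : R :=
  if i == 0%N then radius c
  else if i == 1%N then ((c 1%N)%:R - (c 0%N)%:R) / 2
  else (c i)%:R + 3 / 2 - radius c.

Definition index_bounded (c : nat -> nat) : Prop :=
  forall g, (g < k)%N -> (c g < m)%N.

Lemma index_boundedR c g : index_bounded c -> (g < k)%N -> (c g)%:R < m%:R :> R.
Proof. by move=> c_lt gk; rewrite ltr_nat c_lt. Qed.

Lemma curve_offset_bounded g j t i : (j < m)%N -> 0 <= t < 1 / 2 ->
  `|curve_offset g j t i| <= 2 * m.+1%:R.
Proof.
move=> j_lt /andP[t_ge0 t_lt].
have j_lt' : j%:R + 1 <= m%:R :> R by rewrite natr1 ler_nat.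
have := ler0n R j; rewrite /curve_offset -[m.+1%:R]natr1 natrD -[j.+1%:R]natr1.
by do ![case: ifP => _]; rewrite ler_norml => ?; apply/andP; split; lra.
Qed.

Lemma query_offset_bounded c i : index_bounded c -> (i < k)%N ->
  `|query_offset c i| <= 2 * m.+1%:R.
Proof.
move=> c_lt ik.
have c0_lt := index_boundedR c_lt (ltnW k_gt1).
have c1_lt := index_boundedR c_lt k_gt1.
have ci_lt := index_boundedR c_lt ik.
have := ler0n R (c 0%N); have := ler0n R (c 1%N); have := ler0n R (c i).
rewrite /query_offset /radius -[m.+1%:R]natr1 natrD.
by do ![case: ifP => _]; rewrite ler_norml => *; apply/andP; split; lra.
Qed.

Lemma curve_offset_close c g j t i : index_bounded c -> 0 <= t < 1 / 2 ->
  (g < k)%N -> (j <= c g)%N -> (i < k)%N ->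
  `|curve_offset g j t i - query_offset c i| <= radius c.
Proof.
move=> c_lt /andP[t_ge0 t_lt] gk jc ik.
have c0_lt := index_boundedR c_lt (ltnW k_gt1).
have c1_lt := index_boundedR c_lt k_gt1.
have ci_lt := index_boundedR c_lt ik.
have jc' : j%:R <= (c g)%:R :> R by rewrite ler_nat.
have := ler0n R (c 0%N); have := ler0n R (c 1%N); have := ler0n R (c i).
have := ler0n R j; rewrite /curve_offset /query_offset /radius ler_norml.
rewrite !natrD -[j.+1%:R]natr1.
case: i ik ci_lt => [|[|i]] ik ci_lt /=; first by move=> *; lra.
  by case: g gk jc jc' => [|[|g]] gk _ jc' /= *; lra.
by case: eqP => [gi|_] /= *; [move: jc'; rewrite gi => ?|]; lra.
Qed.

Lemma curve_offset_far c g j t : index_bounded c -> 0 <= t < 1 / 2 ->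
  (g < k)%N -> (c g < j)%N ->
  exists2 i, (i < k)%N & radius c < `|curve_offset g j t i - query_offset c i|.
Proof.
move=> c_lt /andP[t_ge0 t_lt] gk cj.
have cj' : (c g)%:R + 1 <= j%:R :> R by rewrite natr1 ler_nat.
have := ler0n R (c 0%N); have := ler0n R (c 1%N); have := ler0n R j.
rewrite /curve_offset /query_offset /radius !natrD -[j.+1%:R]natr1.
case: g gk cj cj' => [|[|g]] gk _ cj'.
- by exists 1%N => //= *; rewrite ltr_normr; apply/orP; right; lra.
- by exists 1%N => //= *; rewrite ltr_normr; apply/orP; left; lra.
- by exists g.+2 => //= *; rewrite eqxx ltr_normr; apply/orP; left; lra.
Qed.

Lemma curve_offset1 g j t : exists z : int, curve_offset g j t 1 = t + z%:~R.
Proof.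
rewrite /curve_offset /=; case: ifP => _; first by exists (- (j.+1 + m)%:Z); rewrite mulrNz.
by case: ifP => _; [exists (j.+1 + m)%:Z | exists 0; rewrite addr0].
Qed.

Definition tiebreak (p : nat) : R := p%:R / (2 * n.+1%:R).

Lemma tiebreak_bounded p : (p < n)%N -> 0 <= tiebreak p < 1 / 2.
Proof.
move=> p_lt; rewrite divr_ge0 ?mulr_ge0 ?ler0n //= ltr_pdivrMr ?mulr_gt0 ?ltr0n //.
by rewrite mulrA mul1r mulVf ?pnatr_eq0 // mul1r ltr_nat; lia.
Qed.

Lemma tiebreak_inj : injective tiebreak.
Proof.
move=> p q /(congr1 (fun x => x * (2 * n.+1%:R))).
by rewrite !divfK ?mulf_neq0 ?pnatr_eq0 // => /eqP; rewrite eqr_nat => /eqP.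
Qed.

Definition grid : R := 8 * m.+1%:R.

Definition curve (p : nat) : seq R :=
  spread grid (curve_offset (p %/ m) (p %% m) (tiebreak p)) k.

Definition query (c : nat -> nat) : seq R := spread grid (query_offset c) k.

Definition curves : seq (seq R) := map curve (iota 0 n).

Lemma curve_inj : {in gtn n &, injective curve}.
Proof.
move=> p q p_lt q_lt /(congr1 (fun P => P`_1)); rewrite !nth_spread // => /addrI.
have [z ->] := curve_offset1 (p %/ m) (p %% m) (tiebreak p).
have [z' ->] := curve_offset1 (q %/ m) (q %% m) (tiebreak q).
have /andP[? ?] := tiebreak_bounded p_lt; have /andP[? ?] := tiebreak_bounded q_lt.
by move/fraction_inj => eq_pq; apply/tiebreak_inj/eq_pq; apply/andP; split; lra.
Qed.

Lemma uniq_curves : uniq curves.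
Proof.
rewrite map_inj_in_uniq ?iota_uniq // => p q.
by rewrite !mem_iota !add0n; apply: curve_inj.
Qed.

Lemma size_curves : size curves = n.
Proof. by rewrite size_map size_iota. Qed.

Lemma size_curve_all : all (fun P => size P == k) curves.
Proof. by apply/allP => _ /mapP [p _ ->]; rewrite size_spread. Qed.

Lemma dfd_curve_query_ge c p i : (0 < m)%N -> index_bounded c -> (p < n)%N ->
  (i < k)%N ->
  `|curve_offset (p %/ m) (p %% m) (tiebreak p) i - query_offset c i|
    <= dfd (curve p) (query c).
Proof.
move=> m_gt0 c_lt p_lt ik; apply: (dfd_spread_ge (W := 2 * m.+1%:R)).
- move=> i' i'k; split; last exact: query_offset_bounded.
  by apply: curve_offset_bounded; [rewrite ltn_mod|exact: tiebreak_bounded].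
- by rewrite /grid mulrA; have := ler0n R m.+1; lra.
- exact: ik.
Qed.

Lemma radius_le_dfd c p : (0 < m)%N -> index_bounded c -> (p < n)%N ->
  radius c <= dfd (curve p) (query c).
Proof.
move=> m_gt0 c_lt p_lt; have := dfd_curve_query_ge (i := 0%N) m_gt0 c_lt p_lt (ltnW k_gt1).
by rewrite /curve_offset /query_offset /= sub0r normrN; exact: le_trans (ler_norm _).
Qed.

Lemma dfd_le_radius c p : index_bounded c -> (p < n)%N ->
  (p %/ m < k)%N -> (p %% m <= c (p %/ m))%N -> dfd (curve p) (query c) <= radius c.
Proof.
move=> c_lt p_lt gk jc; apply: dfd_spread_le => [||i ik]; first lia.
- by rewrite /radius; have := ler0n R (c 0%N + c 1%N)%N; have := ler0n R m; lra.
- by apply: curve_offset_close => //; exact: tiebreak_bounded.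
Qed.

Lemma nearest_query c : (0 < m)%N -> index_bounded c ->
  nearest_set curves (query c) = [set P | P \in curves /\ dfd P (query c) <= radius c].
Proof.
move=> m_gt0 c_lt; apply: nearest_setE => [_ /mapP [p + ->]|].
  by rewrite mem_iota add0n => /andP[_ p_lt]; exact: radius_le_dfd.
have n_gt0 : (0 < n)%N by move: m_gt0; rewrite divn_gt0; lia.
exists (curve 0); first by apply: map_f; rewrite mem_iota.
by apply: dfd_le_radius; rewrite ?div0n ?mod0n //; lia.
Qed.

Lemma nearest_query_separates c c' g : (0 < m)%N ->
  index_bounded c -> index_bounded c' -> (g < k)%N -> (c g < c' g)%N ->
  nearest_set curves (query c) <> nearest_set curves (query c').
Proof.
move=> m_gt0 c_lt c'_lt gk lt_cc'; rewrite !nearest_query // => eq_near.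
set p := (g * m + c' g)%N.
have c'g_lt := c'_lt g gk.
have p_div : (p %/ m = g)%N by rewrite divnMDl // divn_small ?addn0.
have p_mod : (p %% m = c' g)%N by rewrite modnMDl modn_small.
have p_lt : (p < n)%N.
  apply: (@leq_trans (g.+1 * m)); first by rewrite mulSn; lia.
  by apply: leq_trans (leq_trunc_div n k); rewrite mulnC leq_mul2l gk orbT.
have : [set P | P \in curves /\ dfd P (query c') <= radius c'] (curve p).
  split; first by rewrite map_f // mem_iota.
  by apply: dfd_le_radius; rewrite ?p_div ?p_mod.
rewrite -eq_near => -[_ p_near].
have [i ik far] : exists2 i, (i < k)%N &
    radius c < `|curve_offset (p %/ m) (p %% m) (tiebreak p) i - query_offset c i|.
  by rewrite p_div p_mod; apply: curve_offset_far => //; exact: tiebreak_bounded.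
by have := dfd_curve_query_ge m_gt0 c_lt p_lt ik; lra.
Qed.

Definition ffun_index (F : {ffun 'I_k -> 'I_m}) (g : nat) : nat :=
  odflt 0%N (omap (fun g' => val (F g')) (insub g)).

Lemma ffun_indexE F (g : 'I_k) : ffun_index F g = F g.
Proof. by rewrite /ffun_index valK. Qed.

Lemma ffun_index_bounded F : index_bounded (ffun_index F).
Proof. by move=> g gk; rewrite (ffun_indexE F (Ordinal gk)). Qed.

Lemma nearest_query_inj :
  injective (fun F : {ffun 'I_k -> 'I_m} => nearest_set curves (query (ffun_index F))).
Proof.
move=> F F' /= eq_near; have m_gt0 : (0 < m)%N.
  by case: (F (Ordinal (ltnW k_gt1))) => j; case: m.
apply/ffunP => g; apply: val_inj => /=; rewrite -!ffun_indexE.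
have [lt_FF'|lt_F'F|//] := ltngtP (ffun_index F g) (ffun_index F' g).
- by case: (nearest_query_separates m_gt0 (ffun_index_bounded F)
             (ffun_index_bounded F') (ltn_ord g) lt_FF' eq_near).
- by case: (nearest_query_separates m_gt0 (ffun_index_bounded F')
             (ffun_index_bounded F) (ltn_ord g) lt_F'F (esym eq_near)).
Qed.

End Construction.

Section SingleVertex.
Variable R : realType.

Definition points (n : nat) : seq (seq R) := [seq [:: p%:R] | p <- iota 0 n].

Lemma dfd_singleton (x y : R) : dfd [:: x] [:: y] = `|x - y|.
Proof.
apply/eqP; rewrite eq_le; apply/andP; split; first by apply: dfd_le_pointwise => // -[].
exact: (@dfd_ge_head _ [:: x] [:: y]).
Qed.

Lemma uniq_points n : uniq (points n).
Proof. by rewrite map_inj_uniq ?iota_uniq // => p q [] /eqP; rewrite eqr_nat => /eqP. Qed.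

Lemma nearest_point_inj n :
  {in gtn n &, injective (fun a => nearest_set (points n) [:: a%:R])}.
Proof.
move=> a b a_lt b_lt /= eq_near.
have mem_points c : (c < n)%N -> [:: c%:R] \in points n.
  by move=> c_lt; apply/mapP; exists c; rewrite // mem_iota.
have : nearest_set (points n) [:: a%:R] [:: a%:R].
  split=> [|_ /mapP [p _ ->]]; first exact: mem_points.
  by rewrite !dfd_singleton subrr normr0.
rewrite eq_near => -[_ /(_ _ (mem_points b b_lt))].
by rewrite !dfd_singleton subrr normr0 normr_le0 subr_eq0 eqr_nat => /eqP.
Qed.

End SingleVertex.

Theorem lemma1 (R : realType) (n k : nat) (hk : (0 < k)%N) :
  exists S : seq (seq R),
    [/\ uniq S, size S = n, all (fun P => size P == k) S &
     exists Qs : 'I_((n %/ k) ^ k) -> seq R,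
       (forall i, size (Qs i) = k) /\
       injective (fun i => nearest_set S (Qs i))].
Proof.
have [k_gt1|k_le1] := ltnP 1 k.
  exists (curves R n k); split;
    [exact: uniq_curves | exact: size_curves | exact: size_curve_all |].
  have card_idx : ((n %/ k) ^ k = #|{ffun 'I_k -> 'I_(n %/ k)}|)%N.
    by rewrite card_ffun !card_ord.
  pose F i := enum_val (cast_ord card_idx i).
  exists (fun i => query R n k (ffun_index (F i))); split=> [i|i j /= eq_near].
    exact: size_spread.
  have eqF : F i = F j := nearest_query_inj k_gt1 eq_near.
  by apply: (cast_ord_inj (eq_n := card_idx)); apply: enum_val_inj.
have -> : k = 1%N by lia.
exists (points R n); split; [exact: uniq_points | by rewrite size_map size_iota |
  by apply/allP => _ /mapP [p _ ->] |].
exists (fun i => [:: (val i)%:R]); split => // a b eq_near.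
have lt_n (i : 'I_((n %/ 1) ^ 1)) : (i < n)%N by rewrite divn1 expn1 in i *.
by apply: val_inj; exact: (@nearest_point_inj R n _ _ (lt_n a) (lt_n b) eq_near).
Qed.
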